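(* Let $q\ge2$ be an even integer. The interpolated fusion ring $\mathcal{R}_q$ has rank $q+1$ and Frobenius–Perron dimension $q(q^2-1)$, its basis consists of $x_{1,1}$, $x_{q-1,c}$ ($1\le c\le q/2$), $x_{q,1}$, $x_{q+1,c}$ ($1\le c\le (q-2)/2$) with $\mathrm{FPdim}(x_{d,c})=d$, and its fusion rules are (all sums over $c_3$, resp. $c_2$, run over the allowed index range of the corresponding basis elements): $x_{q-1,c_1}x_{q-1,c_2}=\delta_{c_1,c_2}x_{1,1}+\sum_{c_3:\ c_1+c_2+c_3\notin\{q+1,\,2\max(c_1,c_2,c_3)\}}x_{q-1,c_3}+(1-\delta_{c_1,c_2})x_{q,1}+\sum_{c_3}x_{q+1,c_3}$; $x_{q-1,c_1}x_{q,1}=\sum_{c_2}(1-\delta_{c_1,c_2})x_{q-1,c_2}+x_{q,1}+\sum_{c_2}x_{q+1,c_2}$; $x_{q-1,c_1}x_{q+1,c_2}=\sum_{c_3}x_{q-1,c_3}+x_{q,1}+\sum_{c_3}x_{q+1,c_3}$; $x_{q,1}x_{q,1}=x_{1,1}+\sum_cx_{q-1,c}+x_{q,1}+\sum_cx_{q+1,c}$; $x_{q,1}x_{q+1,c_1}=\sum_{c_2}x_{q-1,c_2}+x_{q,1}+\sum_{c_2}(1+\delta_{c_1,c_2})x_{q+1,c_2}$; $x_{q+1,c_1}x_{q+1,c_2}=\delta_{c_1,c_2}x_{1,1}+\sum_{c_3}x_{q-1,c_3}+(1+\delta_{c_1,c_2})x_{q,1}+\sum_{c_3:\ c_1+c_2+c_3\notin\{q-1,\,2\max(c_1,c_2,c_3)\}}x_{q+1,c_3}+\sum_{c_3:\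 c_1+c_2+c_3\in\{q-1,\,2\max(c_1,c_2,c_3)\}}2x_{q+1,c_3}$; and $x_{1,1}$ is the unit; the remaining products follow by commutativity.
   Context: $\zeta_n=\exp(2\pi i/n)$. A fusion ring is a ring which is a free $\mathbb{Z}$-module with finite basis, nonnegative integer structure constants, a unit basis element, a duality on the basis and Frobenius reciprocity; $\mathrm{FPdim}$ is the unique ring homomorphism to $\mathbb{C}$ positive on the basis, and $\mathrm{FPdim}$ of the ring is $\sum_b\mathrm{FPdim}(b)^2$. For even $q\ge2$, $\mathcal{R}_q$ is the commutative fusion ring whose basis is the set of rows of the following formal table $(\lambda_{x,s})$ and whose structure constants are $N_{x,y}^z=\sum_s\lambda_{x,s}\lambda_{y,s}\overline{\lambda_{z,s}}/\mathfrak{c}_s$ with $\mathfrak{c}_s=\sum_x|\lambda_{x,s}|^2$. Columns: $C_0$; $C_1$; $A_k$ ($1\le k\le\frac{q-2}{2}$); $B_k$ ($1\le k\le\frac q2$). Rows (entries in that column order): $x_{1,1}$: $1,1,1,1$. $x_{q-1,c}$ ($1\le c\le \frac q2$): $q-1,\,-1,\,0,\,-\zeta_{q+1}^{kc}-\zeta_{q+1}^{-kc}$. $x_{q,1}$: $q,0,1,-1$. $x_{q+1,c}$ ($1\le c\le\frac{q-2}{2}$): $q+1,\,1,\,\zeta_{q-1}^{kc}+\zeta_{q-1}^{-kc},\,0$. (For $q$ a power of $2$ this is the character table of $\mathrm{PSL}(2,q)$.) *)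

From HB Require Import structures.
From mathcomp Require Import all_boot all_order all_algebra.
From mathcomp Require Import reals trigo.
From mathcomp Require Import complex.



Unset Printing Implicit Defensive.

Import Order.TTheory GRing.Theory Num.Theory.
Local Open Scope ring_scope.

(* Labels of the basis elements of R_q:
   X1 = x_{1,1}, Xm c = x_{q-1,c}, Xq = x_{q,1}, Xp c = x_{q+1,c}. *)
Inductive lab := X1 | Xm of nat | Xq | Xp of nat.

Definition lab_code (x : lab) : nat * nat :=
  match x with X1 => (0, 0) | Xm c => (1, c) | Xq => (2, 0) | Xp c => (3, c) end%N.
Definition lab_decode (p : nat * nat) : option lab :=
  match p with
  | (0, _) => Some X1 | (1, c) => Some (Xm c) | (2, _) => Some Xq
  | (3, c) => Some (Xp c) | _ => None end%N.
Lemma lab_codeK : pcancel lab_code lab_decode. Proof. by case. Qed.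
HB.instance Definition _ := Equality.copy lab (pcan_type lab_codeK).

(* Labels of the columns of the formal table: C_0, C_1, A_k, B_k. *)
Inductive col := C0 | C1 | A of nat | B of nat.

Definition basis (q : nat) : seq lab :=
  X1 :: [seq Xm c | c <- iota 1 q./2] ++ Xq :: [seq Xp c | c <- iota 1 (q - 2)./2].

Definition cols (q : nat) : seq col :=
  C0 :: C1 :: [seq A k | k <- iota 1 (q - 2)./2] ++ [seq B k | k <- iota 1 q./2].

Local Open Scope complex_scope.

Definition zeta (R : realType) (n : nat) : R[i] :=
  (cos (2 * pi / n%:R) +i* sin (2 * pi / n%:R)).

Local Close Scope complex_scope.

Definition lambda (R : realType) (q : nat) (x : lab) (s : col) : R[i] :=
  match x, s with
  | X1, _ => 1
  | Xm _, C0 => (q - 1)%:R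
  | Xm _, C1 => -1
  | Xm _, A _ => 0
  | Xm c, B k => - (zeta R q.+1 ^+ (k * c) + (zeta R q.+1) ^- (k * c))
  | Xq, C0 => q%:R
  | Xq, C1 => 0
  | Xq, A _ => 1
  | Xq, B _ => -1
  | Xp _, C0 => q.+1%:R
  | Xp _, C1 => 1
  | Xp c, A k => zeta R (q - 1) ^+ (k * c) + (zeta R (q - 1)) ^- (k * c)
  | Xp _, B _ => 0
  end.

Definition cnorm (R : realType) (q : nat) (s : col) : R[i] :=
  \sum_(x <- basis q) `|lambda R q x s| ^+ 2.

Definition fusN (R : realType) (q : nat) (x y z : lab) : R[i] :=
  \sum_(s <- cols q) lambda R q x s * lambda R q y s * (lambda R q z s)^* / cnorm R q s.

Definition fpd (q : nat) (x : lab) : nat :=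
  match x with X1 => 1 | Xm _ => q - 1 | Xq => q | Xp _ => q.+1 end%N.

(* f is a ring homomorphism R_q -> C (given on the basis, extended linearly)
   that is positive on the basis: the defining property of FPdim. *)
Definition isFPdim (R : realType) (q : nat) (f : lab -> R[i]) : Prop :=
  [/\ f X1 = 1,
      (forall x, x \in basis q -> 0 < f x) &
      (forall x y, x \in basis q -> y \in basis q ->
         f x * f y = \sum_(z <- basis q) fusN R q x y z * f z)].

(* Fusion rules as stated in the theorem (coefficient of z in x*y), for the
   products listed explicitly; the other products are obtained by commutativity. *)
Definition rule0 (q : nat) (x y z : lab) : nat :=
  match x, y with
  | X1, _ => (z == y)
  | Xm c1, Xm c2 =>
      match z with
      | X1 => (c1 == c2)
      | Xm c3 => (c1 + c2 + c3 \notin [:: q.+1; 2 * maxn c1 (maxn c2 c3)])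
      | Xq => (c1 != c2)
      | Xp _ => 1
      end
  | Xm c1, Xq =>
      match z with X1 => 0 | Xm c2 => (c1 != c2) | Xq => 1 | Xp _ => 1 end
  | Xm _, Xp _ =>
      match z with X1 => 0 | _ => 1 end
  | Xq, Xq => 1
  | Xq, Xp c1 =>
      match z with X1 => 0 | Xm _ => 1 | Xq => 1 | Xp c2 => 1 + (c1 == c2) end
  | Xp c1, Xp c2 =>
      match z with
      | X1 => (c1 == c2)
      | Xm _ => 1
      | Xq => 1 + (c1 == c2)
      | Xp c3 => if c1 + c2 + c3 \in [:: q - 1; 2 * maxn c1 (maxn c2 c3)] then 2 else 1
      end
  | _, _ => 0
  end%N.

Definition listed (x y : lab) : bool :=
  match x, y with
  | X1, _ => true
  | _, X1 => false
  | Xm _, _ | Xq, Xq | Xq, Xp _ | Xp _, Xp _ => true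
  | _, _ => false
  end.

Definition rule (q : nat) (x y z : lab) : nat :=
  if listed x y then rule0 q x y z else rule0 q y x z.

From Pilot Require Import Defs.
From HB Require Import structures.
From mathcomp Require Import all_boot all_order all_algebra.
From mathcomp Require Import reals trigo.
From mathcomp Require Import complex.
From mathcomp Require Import ring zify.
Import Order.TTheory GRing.Theory Num.Theory.
Local Open Scope ring_scope.

(* On the columns [A_k] and [B_k] the row [x_{d,c}] of the table is a fixed multiple of
   [u^c + u^-c], where [u = zeta_n^k] is a power of a primitive root of unity of odd order
   [n = q -/+ 1]; all entries are real. A product of three such values is a sum of four, and
   summing [u^s + u^-s] over [1 <= k <= (n-1)/2] gives [n [n | s] - 1]. This evaluates the
   column norms and writes [N_{x,y}^z] in closed form through the number of signs with
   [+-c1 +- c2 +- c3 = 0 (mod n)]; the fusion rules then follow by a finite case analysis.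
   The column [C_0] is orthogonal to all other columns, so [x |-> lambda_{x,C_0}] is a ring
   homomorphism, positive on the basis. Conversely, for any such [f] the products
   [x_{q,1}^2], [x_{q-1,c} x_{q,1}] and [x_{q,1} x_{q+1,c}] force [f x_{q-1,c} = f x_{q,1} - 1],
   [f x_{q+1,c} = f x_{q,1} + 1], and then [f x_{q,1} ^ 2 = q f x_{q,1}]. *)

Lemma dvdn_ltn_eq0 d m : (m < d)%N -> (d %| m)%N = (m == 0)%N.
Proof. by move=> lt_md; rewrite /dvdn modn_small. Qed.

Lemma dvdz_ltn n m : (0 < m < n)%N -> (n%:Z %| m%:Z)%Z = false.
Proof. by case/andP=> m_gt0 lt_mn; rewrite dvdzE /= dvdn_ltn_eq0 // gtn_eqF. Qed.

Lemma dvdn_ltn_double d m : (m < d.*2)%N -> (d %| m)%N = (m == 0)%N || (m == d).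
Proof.
move=> lt_m_2d; have [lt_md | le_dm] := ltnP m d.
  by rewrite dvdn_ltn_eq0 // (ltn_eqF lt_md) orbF.
rewrite -(subnKC le_dm) dvdn_addr // dvdn_ltn_eq0; last by move: lt_m_2d; rewrite -addnn; lia.
by apply/idP/idP; lia.
Qed.

(* The number of sign choices, up to a global sign, making [+-a +- b +- c] divisible by [n]. *)
Definition nsigns (n : nat) (a b c : int) : nat :=
  ((n%:Z %| (a + b + c)%R)%Z + (n%:Z %| (a + b - c)%R)%Z +
   (n%:Z %| (a - b + c)%R)%Z + (n%:Z %| (- a + b + c)%R)%Z)%N.

Lemma nsigns_small m (a b c : nat) : (a <= m)%N -> (b <= m)%N -> (c <= m)%N ->
  nsigns m.*2.+1 a b c =
  (((a + b + c == 0) || (a + b + c == m.*2.+1)) + (a + b == c) + (a + c == b) + (b + c == a))%N.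
Proof.
move=> le_am le_bm le_cm; set n := m.*2.+1.
have small s : (`|s| < n)%N -> (n%:Z %| s)%Z = (s == 0).
  by move=> lt_sn; rewrite dvdzE dvdn_ltn_eq0 // absz_eq0.
rewrite /nsigns -!PoszD dvdzE absz_nat dvdn_ltn_double; last by rewrite /n; lia.
by rewrite !small; lia.
Qed.

Lemma addn3_eq_double_max a b c :
  (a + b + c == 2 * maxn a (maxn b c))%N = [|| a + b == c, a + c == b | b + c == a]%N.
Proof.
apply/idP/idP => [/eqP|]; last by lia.
by case: (leqP a (maxn b c)); case: (leqP b c) => *; apply/orP; lia.
Qed.

Section Zeta.
Context {R : realType}.

Lemma zetaX n m : zeta R n ^+ m =
  (cos (2 * pi / n%:R *+ m) +i* sin (2 * pi / n%:R *+ m))%C.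
Proof.
rewrite /zeta; set t := 2 * pi / n%:R.
elim: m => [|m IHm]; first by rewrite expr0 !mulr0n cos0 sin0.
by rewrite exprSr IHm mulrSr cosD sinD; congr (_ +i* _)%C; ring.
Qed.

Lemma zeta_mul_conj n : zeta R n * (zeta R n)^* = 1.
Proof.
rewrite /zeta; set t := 2 * pi / n%:R; simpc.
by apply/eqP; rewrite eq_complex /= -(cos2Dsin2 t) !expr2; apply/andP; split; apply/eqP; ring.
Qed.

Lemma zeta_neq0 n : zeta R n != 0.
Proof. by apply: contra_eq_neq (zeta_mul_conj n) => ->; rewrite mul0r eq_sym oner_neq0. Qed.

Lemma conj_zeta n : (zeta R n)^* = (zeta R n)^-1.
Proof. by rewrite -[LHS](mulKf (zeta_neq0 n)) zeta_mul_conj mulr1. Qed.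

Lemma zeta_prim n : (0 < n)%N -> n.-primitive_root (zeta R n).
Proof.
move=> n_gt0; have n0 : n%:R != 0 :> R by rewrite pnatr_eq0 -lt0n.
have zn1 : zeta R n ^+ n = 1.
  rewrite zetaX (_ : _ *+ n = pi *+ 2) ?cos2pi ?sin2pi //.
  by rewrite -mulr_natr; field.
have [m prim_m m_dvd_n] := prim_order_exists n_gt0 zn1.
have m_gt0 := prim_order_gt0 prim_m.
suff m_eq_n : m = n by rewrite m_eq_n in prim_m.
apply/eqP; rewrite eqn_leq dvdn_leq //= leqNgt; apply/negP => lt_mn.
(* A proper order [m < n] would give [cos (2 y) = 1] with [0 < y = pi m / n < pi]. *)
pose y : R := pi * m%:R / n%:R.
have sin_y_gt0 : 0 < sin y.
  apply: sin_gt0_pi; rewrite /y divr_gt0 ?mulr_gt0 ?pi_gt0 ?ltr0n //=.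
  by rewrite ltr_pdivrMr ?ltr0n // ltr_pM2l ?pi_gt0 // ltr_nat.
have [cos2y _] : cos (y *+ 2) = 1 /\ sin (y *+ 2) = 0.
  have := prim_expr_order prim_m; rewrite zetaX (_ : _ *+ m = y *+ 2).
    by case.
  by rewrite /y -mulr_natl -[in RHS]mulr_natl; field.
move: cos2y; rewrite cos_mulr2n cos2sin2 mulr2n => /eqP.
rewrite -subr_eq0 (_ : _ - 1 = - (sin y ^+ 2 *+ 2)); last by rewrite mulr2n; ring.
by rewrite oppr_eq0 mulrn_eq0 /= expf_eq0 /= (gt_eqF sin_y_gt0).
Qed.

End Zeta.

Section SymmetricPowers.
Context {F : fieldType}.

(* [sympow (zeta_n ^+ k) s = 2 cos (2 pi k s / n)]. *)
Definition sympow (u : F) (s : int) := u ^ s + u ^ (- s).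

Lemma sympow_nat u (c : nat) : sympow u c = u ^+ c + (u ^+ c)^-1.
Proof. by rewrite /sympow exprnN. Qed.

Lemma sympow0 u : sympow u 0 = 2.
Proof. by rewrite /sympow oppr0 expr0z. Qed.

Lemma sympow_exprC (z : F) (k c : nat) : sympow (z ^+ k) c = sympow (z ^+ c) k.
Proof. by rewrite !sympow_nat -!exprM mulnC. Qed.

Lemma sympowM2 u (a b : int) : u != 0 ->
  sympow u a * sympow u b = sympow u (a + b) + sympow u (a - b).
Proof. by move=> u0; rewrite /sympow !opprD !opprK !expfzDr //; ring. Qed.

Lemma sympowM3 u (a b c : int) : u != 0 ->
  sympow u a * sympow u b * sympow u c =
  sympow u (a + b + c) + sympow u (a + b - c) + sympow u (a - b + c) + sympow u (- a + b + c).
Proof. by move=> u0; rewrite /sympow !opprD !opprK !expfzDr //; ring. Qed.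

Lemma sum_expr_root (w : F) n : w ^+ n = 1 ->
  \sum_(k < n) w ^+ k = if w == 1 then n%:R else 0.
Proof.
move=> wn1; have [->|w_neq1] := eqVneq w 1.
  by rewrite (eq_bigr (fun=> 1)) => [|k _]; rewrite ?sumr_const ?card_ord ?expr1n.
apply/eqP; move: (subrX1 w n); rewrite wn1 subrr => /esym/eqP.
by rewrite mulf_eq0 subr_eq0 (negPf w_neq1).
Qed.

Lemma prim_root_exprz_eq1 n (w : F) (s : int) : n.-primitive_root w ->
  (w ^ s == 1) = ((n%:Z) %| s)%Z.
Proof.
by move=> prim_w; rewrite dvdzE; case: s => m; rewrite ?invr_eq1 -(prim_order_dvd prim_w).
Qed.

(* As [n = 2h+1] is odd, [k] and [n - k] for [1 <= k <= h] run once through [1, n - 1]. *)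
Lemma sum_sympow_prim_root (w : F) h (s : int) : (h.*2.+1).-primitive_root w ->
  \sum_(k <- iota 1 h) sympow (w ^+ k) s =
  (if ((h.*2.+1)%:Z %| s)%Z then (h.*2.+1)%:R else 0) - 1.
Proof.
set n := h.*2.+1 => prim_w; set v := w ^ s.
rewrite (_ : iota 1 h = index_iota 1 h.+1); last by rewrite /index_iota subSS subn0.
have vn1 : v ^+ n = 1.
  by rewrite /v exprnP exprz_exp mulrC -exprz_exp -exprnP prim_expr_order // exp1rz.
have v_unit : v \is a GRing.unit.
  by rewrite unitfE /v expfz_neq0 // (prim_root_eq0 prim_w).
have sympowE k : (k <= n)%N -> sympow (w ^+ k) s = v ^+ k + v ^+ (n - k).
  move=> le_kn; rewrite /sympow (exprB le_kn v_unit) vn1 div1r.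
  by rewrite /v exprnN !exprnP !exprz_exp !mulrN [(k%:Z * s)%R]mulrC.
rewrite (@eq_big_nat _ 0 +%R 1 h.+1 _ (fun k => v ^+ k + v ^+ (n - k))); last first.
  by move=> k lt_k; apply: sympowE; lia.
have reflect_half : \sum_(1 <= k < h.+1) v ^+ (n - k) = \sum_(h.+1 <= k < n) v ^+ k.
  rewrite big_nat_rev (big_addn 1 n h) (_ : n - h = h.+1)%N; last by lia.
  by apply: eq_big_nat => k lt_k; congr (_ ^+ _); lia.
rewrite big_split /= reflect_half -big_cat_nat // ?ltnS -?addnn ?leq_addr //.
rewrite -(prim_root_exprz_eq1 _ _ _ prim_w) -(sum_expr_root _ _ vn1).
by rewrite -(big_mkord xpredT (fun k => v ^+ k)) [in RHS]big_ltn // expr0 addrC addKr.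
Qed.

Lemma sum_sympowM3_prim_root (w : F) h (a b c : int) : (h.*2.+1).-primitive_root w ->
  \sum_(k <- iota 1 h) sympow (w ^+ k) a * sympow (w ^+ k) b * sympow (w ^+ k) c =
  (h.*2.+1)%:R * (nsigns h.*2.+1 a b c)%:R - 4.
Proof.
move=> prim_w; have w_neq0 : w != 0 by rewrite (prim_root_eq0 prim_w).
under eq_bigr do rewrite sympowM3 ?expf_neq0 //.
rewrite big_split big_split big_split /= !(sum_sympow_prim_root _ _ _ prim_w).
by rewrite /nsigns !natrD -!mulrb; ring.
Qed.

End SymmetricPowers.

Section Table.
Variables (R : realType) (q : nat).
Hypotheses (q_ge2 : (2 <= q)%N) (q_even : ~~ odd q).
Local Notation C := R[i].
Local Notation h := q./2.
Local Notation lam := (lambda R q).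

Lemma q_double : q = h.*2. Proof. by rewrite even_halfK. Qed.

Lemma half_gt0 : (0 < h)%N. Proof. by have := q_double; lia. Qed.

Lemma half_q_sub2 : ((q - 2)./2 = h - 1)%N.
Proof. by rewrite {1}q_double -(doubleB h 1) doubleK. Qed.

Lemma orderA : (((q - 2)./2).*2.+1 = q - 1)%N.
Proof. by rewrite half_q_sub2; have := q_double; have := half_gt0; lia. Qed.

Lemma orderB : (h.*2.+1 = q.+1)%N. Proof. by rewrite -q_double. Qed.

Lemma natr_q_sub1 : (q - 1)%:R = q%:R - 1 :> C. Proof. by rewrite natrB // ltnW. Qed.

Lemma natr_q_double : q%:R = 2 * h%:R :> C. Proof. by rewrite {1}q_double -mul2n natrM. Qed.

Lemma mulrn_half_sub1 (x : C) : x *+ (h - 1) = x * (h%:R - 1).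
Proof. by rewrite -[LHS]mulr_natr natrB // half_gt0. Qed.

Lemma natr_q_neq0 : q%:R != 0 :> C. Proof. by rewrite pnatr_eq0; lia. Qed.

Lemma natr_q_sub1_neq0 : q%:R - 1 != 0 :> C. Proof. by rewrite -natr_q_sub1 pnatr_eq0; lia. Qed.

Lemma natr_q_add1_neq0 : 1 + q%:R != 0 :> C. Proof. by rewrite addrC natr1 pnatr_eq0. Qed.

Lemma natr_q_sqr_sub1_neq0 : q%:R ^+ 2 - 1 != 0 :> C.
Proof.
rewrite (_ : q%:R ^+ 2 - 1 = (q%:R - 1) * (1 + q%:R)); last by ring.
by rewrite mulf_neq0 ?natr_q_sub1_neq0 ?natr_q_add1_neq0.
Qed.

Lemma zetaA_prim : (((q - 2)./2).*2.+1).-primitive_root (zeta R (q - 1)).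
Proof. by rewrite orderA; apply: zeta_prim; lia. Qed.

Lemma zetaB_prim : (h.*2.+1).-primitive_root (zeta R q.+1).
Proof. by rewrite orderB; apply: zeta_prim. Qed.

Lemma mem_basis x : x \in basis q = match x with
  | X1 | Xq => true | Xm c => (1 <= c <= h)%N | Xp c => (1 <= c <= (q - 2)./2)%N end.
Proof.
have Xm_inj : injective Xm by move=> a b [].
have Xp_inj : injective Xp by move=> a b [].
rewrite /basis in_cons mem_cat in_cons.
case: x => [|c||c] /=; rewrite ?eqxx ?orbT //.
- have -> : (Xm c \in [seq Xp i | i <- iota 1 (q - 2)./2]) = false by apply/mapP => -[].
  by rewrite orbF (mem_map Xm_inj) mem_iota add1n ltnS.
- have -> : (Xp c \in [seq Xm i | i <- iota 1 h]) = false by apply/mapP => -[].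
  by rewrite (mem_map Xp_inj) mem_iota add1n ltnS.
Qed.

Lemma sum_basis (F : lab -> C) : \sum_(x <- basis q) F x =
  F X1 + \sum_(c <- iota 1 h) F (Xm c) + F Xq + \sum_(c <- iota 1 (q - 2)./2) F (Xp c).
Proof. by rewrite /basis big_cons big_cat big_cons !big_map !addrA. Qed.

Lemma sum_cols (F : Defs.col -> C) : \sum_(s <- cols q) F s =
  F C0 + F C1 + \sum_(k <- iota 1 (q - 2)./2) F (A k) + \sum_(k <- iota 1 h) F (B k).
Proof. by rewrite /cols !big_cons big_cat !big_map !addrA. Qed.

Lemma sumr_const_iota (x : C) m n : \sum_(c <- iota m n) x = x *+ n.
Proof. by elim: n m => [|n IHn] m; rewrite ?big_nil // big_cons IHn mulrS. Qed.

Definition lab_index (x : lab) : nat := match x with Xm c | Xp c => c | _ => 0%N end.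

Definition ampA (x : lab) : C :=
  match x with X1 | Xq => 2^-1 | Xm _ => 0 | Xp _ => 1 end.

Definition ampB (x : lab) : C :=
  match x with X1 => 2^-1 | Xm _ => -1 | Xq => - 2^-1 | Xp _ => 0 end.

Lemma lambdaA x k : lam x (A k) = ampA x * sympow (zeta R (q - 1) ^+ k) (lab_index x).
Proof.
have two_neq0 : 2 != 0 :> C by rewrite pnatr_eq0.
by case: x => [|c||c] /=; rewrite ?sympow0 ?sympow_nat -?exprM ?mul0r ?mul1r ?mulVf.
Qed.

Lemma lambdaB x k : lam x (B k) = ampB x * sympow (zeta R q.+1 ^+ k) (lab_index x).
Proof.
have two_neq0 : 2 != 0 :> C by rewrite pnatr_eq0.
by case: x => [|c||c] /=; rewrite ?sympow0 ?sympow_nat -?exprM ?mul0r ?mulN1r ?mulNr ?mulVf.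
Qed.

Lemma lambda_real x s : (lam x s)^* = lam x s.
Proof.
have conj_zetaX n m : ((zeta R n) ^+ m)^* = (zeta R n ^+ m)^-1.
  by rewrite rmorphXn /= conj_zeta exprVn.
case: x; case: s => * /=; rewrite ?rmorph1 ?rmorphN1 ?rmorph0 ?conjC_nat //.
all: by rewrite ?rmorphN rmorphD /= fmorphV /= !conj_zetaX invrK addrC.
Qed.

Lemma sum_sympowA s : \sum_(c <- iota 1 (q - 2)./2) sympow (zeta R (q - 1) ^+ c) s =
  (if ((q - 1)%:Z %| s)%Z then (q - 1)%:R else 0) - 1.
Proof. by have := sum_sympow_prim_root _ _ s zetaA_prim; rewrite orderA. Qed.

Lemma sum_sympowB s : \sum_(c <- iota 1 h) sympow (zeta R q.+1 ^+ c) s =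
  (if (q.+1%:Z %| s)%Z then q.+1%:R else 0) - 1.
Proof. by have := sum_sympow_prim_root _ _ s zetaB_prim; rewrite orderB. Qed.

Lemma sum_sympowM3A a b c :
  \sum_(k <- iota 1 (q - 2)./2) sympow (zeta R (q - 1) ^+ k) a *
    sympow (zeta R (q - 1) ^+ k) b * sympow (zeta R (q - 1) ^+ k) c =
  (q - 1)%:R * (nsigns (q - 1) a b c)%:R - 4.
Proof. by have := sum_sympowM3_prim_root _ _ a b c zetaA_prim; rewrite orderA. Qed.

Lemma sum_sympowM3B a b c :
  \sum_(k <- iota 1 h) sympow (zeta R q.+1 ^+ k) a *
    sympow (zeta R q.+1 ^+ k) b * sympow (zeta R q.+1 ^+ k) c =
  q.+1%:R * (nsigns q.+1 a b c)%:R - 4.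
Proof. by have := sum_sympowM3_prim_root _ _ a b c zetaB_prim; rewrite orderB. Qed.

Lemma cnormE s : cnorm R q s = \sum_(x <- basis q) lam x s ^+ 2.
Proof. by apply: eq_bigr => x _; rewrite normCK lambda_real expr2. Qed.

Lemma cnorm_C0 : cnorm R q C0 = q%:R * (q%:R ^+ 2 - 1).
Proof.
rewrite cnormE sum_basis /= !sumr_const_iota half_q_sub2 mulrn_half_sub1 natr_q_sub1.
by rewrite -[q.+1%:R]natr1 natr_q_double; ring.
Qed.

Lemma cnorm_C1 : cnorm R q C1 = q%:R.
Proof.
by rewrite cnormE sum_basis /= !sumr_const_iota half_q_sub2 mulrn_half_sub1 natr_q_double; ring.
Qed.

Lemma cnorm_A k : (1 <= k <= (q - 2)./2)%N -> cnorm R q (A k) = (q - 1)%:R.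
Proof.
move=> k_range; rewrite cnormE sum_basis big1 => [|c _]; last by rewrite /= expr0n.
under eq_bigr do
  rewrite lambdaA /= mul1r sympow_exprC expr2 sympowM2 ?expf_neq0 ?zeta_neq0 // subrr sympow0.
rewrite /= big_split /= -PoszD sum_sympowA dvdz_ltn; last by have := orderA; lia.
by rewrite sumr_const_iota half_q_sub2 mulrn_half_sub1 natr_q_sub1 natr_q_double; ring.
Qed.

Lemma cnorm_B k : (1 <= k <= h)%N -> cnorm R q (B k) = q.+1%:R.
Proof.
move=> k_range; rewrite cnormE sum_basis [X in _ + X = _]big1 => [|c _]; last first.
  by rewrite /= expr0n.
under eq_bigr do rewrite lambdaB /= mulN1r sqrrN sympow_exprC expr2 sympowM2
  ?expf_neq0 ?zeta_neq0 // subrr sympow0.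
rewrite /= big_split /= -PoszD sum_sympowB dvdz_ltn; last by have := orderB; lia.
by rewrite sumr_const_iota -[q.+1%:R]natr1 natr_q_double; ring.
Qed.

Lemma orth_C0_C1 : \sum_(z <- basis q) lam z C1 * lam z C0 = 0.
Proof.
rewrite sum_basis /= !sumr_const_iota half_q_sub2 mulrn_half_sub1 natr_q_sub1.
by rewrite -[q.+1%:R]natr1 natr_q_double; ring.
Qed.

Lemma orth_C0_A k : (1 <= k <= (q - 2)./2)%N -> \sum_(z <- basis q) lam z (A k) * lam z C0 = 0.
Proof.
move=> k_range; rewrite sum_basis big1 => [|c _]; last by rewrite /= mul0r.
under eq_bigr do rewrite lambdaA mul1r sympow_exprC.
rewrite /= -mulr_suml sum_sympowA dvdz_ltn; last by have := orderA; lia.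
by rewrite -[q.+1%:R]natr1; ring.
Qed.

Lemma orth_C0_B k : (1 <= k <= h)%N -> \sum_(z <- basis q) lam z (B k) * lam z C0 = 0.
Proof.
move=> k_range; rewrite sum_basis [X in _ + X = _]big1 => [|c _]; last by rewrite /= mul0r.
under eq_bigr do rewrite lambdaB mulN1r sympow_exprC.
rewrite /= -mulr_suml sumrN sum_sympowB dvdz_ltn; last by have := orderB; lia.
by rewrite natr_q_sub1; ring.
Qed.

Lemma fusN_closed x y z : fusN R q x y z =
  lam x C0 * lam y C0 * lam z C0 / (q%:R * (q%:R ^+ 2 - 1)) +
  lam x C1 * lam y C1 * lam z C1 / q%:R +
  ampA x * ampA y * ampA z *
    ((q - 1)%:R * (nsigns (q - 1) (lab_index x) (lab_index y) (lab_index z))%:R - 4) / (q - 1)%:R +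
  ampB x * ampB y * ampB z *
    (q.+1%:R * (nsigns q.+1 (lab_index x) (lab_index y) (lab_index z))%:R - 4) / q.+1%:R.
Proof.
rewrite /fusN sum_cols !lambda_real cnorm_C0 cnorm_C1; congr (_ + _ + _ + _).
- rewrite -sum_sympowM3A mulr_sumr mulr_suml.
  apply: eq_big_seq => k; rewrite mem_iota add1n ltnS => k_range.
  by rewrite lambda_real !lambdaA cnorm_A //; ring.
- rewrite -sum_sympowM3B mulr_sumr mulr_suml.
  apply: eq_big_seq => k; rewrite mem_iota add1n ltnS => k_range.
  by rewrite lambda_real !lambdaB cnorm_B //; ring.
Qed.

Lemma nsignsA_small (a b c : nat) :
  (a <= (q - 2)./2)%N -> (b <= (q - 2)./2)%N -> (c <= (q - 2)./2)%N ->
  nsigns (q - 1) a b c =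
  (((a + b + c == 0) || (a + b + c == q - 1)) + (a + b == c) + (a + c == b) + (b + c == a))%N.
Proof. by move=> *; rewrite -orderA nsigns_small. Qed.

Lemma nsignsB_small (a b c : nat) : (a <= h)%N -> (b <= h)%N -> (c <= h)%N ->
  nsigns q.+1 a b c =
  (((a + b + c == 0) || (a + b + c == q.+1)) + (a + b == c) + (a + c == b) + (b + c == a))%N.
Proof. by move=> *; rewrite -orderB nsigns_small. Qed.

Lemma lab_eqE (x y : lab) : (x == y) = (lab_code x == lab_code y).
Proof. by []. Qed.

Ltac decide_eqn :=
  repeat match goal with |- context [?a == ?b] =>
    first [ rewrite (_ : (a == b) = false); last by apply/eqP; lia
          | rewrite (_ : (a == b) = true); last by apply/eqP; lia
          | case: (a =P b) => ? ] end.

Lemma fusN_listed x y z : x \in basis q -> y \in basis q -> z \in basis q -> listed x y ->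
  fusN R q x y z = (rule0 q x y z)%:R.
Proof.
rewrite fusN_closed !mem_basis.
case: x => [|c1||c1]; case: y => [|c2||c2]; case: z => [|c3||c3] //= hx hy hz _;
  rewrite ?(mul0r, mulr0, add0r, addr0) ?nsignsA_small ?nsignsB_small; try lia;
  rewrite ?lab_eqE ?xpair_eqE /= ?inE ?addn3_eq_double_max; decide_eqn;
  rewrite /= ?natr_q_sub1; field;
  by rewrite ?natr_q_neq0 ?natr_q_sub1_neq0 ?natr_q_add1_neq0 ?natr_q_sqr_sub1_neq0.
Qed.

Lemma fusN_sym x y z : fusN R q x y z = fusN R q y x z.
Proof. by apply: eq_bigr => s _; rewrite [lam x s * _]mulrC. Qed.

Lemma listedNC x y : ~~ listed x y -> listed y x.
Proof. by case: x; case: y. Qed.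

Lemma fusN_rule x y z : x \in basis q -> y \in basis q -> z \in basis q ->
  fusN R q x y z = (rule q x y z)%:R.
Proof.
move=> x_in y_in z_in; rewrite /rule; case: ifP => [|not_listed]; first exact: fusN_listed.
by rewrite fusN_sym fusN_listed // listedNC ?not_listed.
Qed.

Lemma sum_fusN_C0 x y :
  \sum_(z <- basis q) fusN R q x y z * lam z C0 = lam x C0 * lam y C0.
Proof.
have fold_col s : \sum_(z <- basis q) lam x s * lam y s * (lam z s)^* / cnorm R q s * lam z C0 =
    lam x s * lam y s / cnorm R q s * \sum_(z <- basis q) lam z s * lam z C0.
  by rewrite mulr_sumr; apply: eq_bigr => z _; rewrite lambda_real; ring.
have sum_sqr_C0 : \sum_(z <- basis q) lam z C0 * lam z C0 = cnorm R q C0.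
  by rewrite cnormE; apply: eq_bigr => z _; rewrite expr2.
under eq_bigr do rewrite /fusN mulr_suml.
rewrite exchange_big /= sum_cols !fold_col sum_sqr_C0 orth_C0_C1 mulr0 addr0.
rewrite big1_seq => [|k /andP[_]]; last first.
  by rewrite mem_iota add1n ltnS => k_range; rewrite fold_col orth_C0_A ?mulr0.
rewrite big1_seq => [|k /andP[_]]; last first.
  by rewrite mem_iota add1n ltnS => k_range; rewrite fold_col orth_C0_B ?mulr0.
by rewrite !addr0 divfK // cnorm_C0 mulf_neq0 ?natr_q_neq0 ?natr_q_sqr_sub1_neq0.
Qed.


Lemma lambda_C0 x : lam x C0 = (fpd q x)%:R.
Proof. by case: x. Qed.

Lemma fpd_isFPdim : isFPdim R q (fun x => (fpd q x)%:R).
Proof.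
split=> [//| x | x y _ _]; first by rewrite mem_basis ltr0n; case: x => //= *; lia.
by under eq_bigr do rewrite -lambda_C0; rewrite sum_fusN_C0 !lambda_C0.
Qed.

Lemma sum_iota_eq (F : nat -> C) c m n : c \in iota m n ->
  \sum_(i <- iota m n) (c == i)%:R * F i = F c.
Proof.
move=> c_in; rewrite (bigD1_seq c) ?iota_uniq //= eqxx mul1r big1 ?addr0 // => i.
by rewrite eq_sym => /negPf ->; rewrite mul0r.
Qed.

Lemma sum_iota_neq (F : nat -> C) c m n : c \in iota m n ->
  \sum_(i <- iota m n) (c != i)%:R * F i = \sum_(i <- iota m n) F i - F c.
Proof.
move=> c_in; rewrite -(sum_iota_eq F _ _ _ c_in) -sumrB; apply: eq_bigr => i _.
by case: (c =P i); rewrite ?mul0r ?mul1r ?subr0 ?subrr.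
Qed.

Section FPdimUniqueness.
Variable f : lab -> C.
Hypothesis f_FPdim : isFPdim R q f.
Local Notation a := (f Xq).
Local Notation sumXm := (\sum_(c <- iota 1 h) f (Xm c)).
Local Notation sumXp := (\sum_(c <- iota 1 (q - 2)./2) f (Xp c)).

Lemma FPdim_mul_rule x y : x \in basis q -> y \in basis q ->
  f x * f y = \sum_(z <- basis q) (rule q x y z)%:R * f z.
Proof.
case: f_FPdim => _ _ f_mul x_in y_in.
by rewrite f_mul //; apply: eq_big_seq => z z_in; rewrite fusN_rule.
Qed.

Lemma FPdim_Xq_sqr : a * a = 1 + sumXm + a + sumXp.
Proof.
case: (f_FPdim) => f1 _ _; rewrite FPdim_mul_rule ?mem_basis // sum_basis /rule /= f1.
rewrite !mul1r; under eq_bigr do rewrite mul1r.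
by under [X in _ + X = _]eq_bigr do rewrite mul1r.
Qed.

Lemma FPdim_Xm_Xq c : (1 <= c <= h)%N -> f (Xm c) * a = sumXm - f (Xm c) + a + sumXp.
Proof.
move=> c_range; have c_in : c \in iota 1 h by rewrite mem_iota add1n ltnS.
rewrite FPdim_mul_rule ?mem_basis // sum_basis /rule /= mul0r add0r mul1r sum_iota_neq //.
by under eq_bigr do rewrite mul1r.
Qed.

Lemma FPdim_Xq_Xp c : (1 <= c <= (q - 2)./2)%N -> a * f (Xp c) = sumXm + a + sumXp + f (Xp c).
Proof.
move=> c_range; have c_in : c \in iota 1 (q - 2)./2 by rewrite mem_iota add1n ltnS.
rewrite FPdim_mul_rule ?mem_basis // sum_basis /rule /= mul0r add0r mul1r.
under [X in _ + X = _]eq_bigr do rewrite natrD mulrDl mul1r.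
rewrite big_split /= sum_iota_eq // addrA.
by under eq_bigr do rewrite mul1r.
Qed.

Lemma FPdim_Xm c : (1 <= c <= h)%N -> f (Xm c) = a - 1.
Proof.
move=> c_range; have a_gt0 : 0 < a by case: f_FPdim => _ f_pos _; apply: f_pos; rewrite mem_basis.
have /(mulIf _) : (f (Xm c)) * (a + 1) = (a - 1) * (a + 1).
  rewrite mulrDr mulr1 FPdim_Xm_Xq // (_ : (a - 1) * (a + 1) = a * a - 1); last by ring.
  by rewrite FPdim_Xq_sqr; ring.
by apply; rewrite gt_eqF // ltr_wpDr ?ler01.
Qed.

Lemma FPdim_Xp c : (1 <= c <= (q - 2)./2)%N -> f (Xp c) = a + 1.
Proof.
move=> c_range; have a_neq1 : a - 1 != 0.
  rewrite -(FPdim_Xm 1) ?half_gt0 //; apply: lt0r_neq0.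
  by case: f_FPdim => _ f_pos _; apply: f_pos; rewrite mem_basis half_gt0.
have /(mulIf a_neq1) // : (f (Xp c)) * (a - 1) = (a + 1) * (a - 1).
rewrite mulrBr mulr1 mulrC FPdim_Xq_Xp // (_ : (a + 1) * (a - 1) = a * a - 1); last by ring.
by rewrite FPdim_Xq_sqr; ring.
Qed.

Lemma FPdim_Xq : a = q%:R.
Proof.
have a_gt0 : 0 < a by case: f_FPdim => _ f_pos _; apply: f_pos; rewrite mem_basis.
have sumXmE : sumXm = (a - 1) *+ h.
  rewrite -(sumr_const_iota _ 1); apply: eq_big_seq => c.
  by rewrite mem_iota add1n ltnS => c_range; rewrite FPdim_Xm.
have sumXpE : sumXp = (a + 1) *+ (h - 1).
  rewrite -half_q_sub2 -(sumr_const_iota _ 1); apply: eq_big_seq => c.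
  by rewrite mem_iota add1n ltnS => c_range; rewrite FPdim_Xp.
have : a * (a - q%:R) = 0.
  by rewrite mulrBr FPdim_Xq_sqr sumXmE sumXpE mulrn_half_sub1 natr_q_double; ring.
by move/eqP; rewrite mulf_eq0 (gt_eqF a_gt0) subr_eq0 => /eqP.
Qed.

End FPdimUniqueness.

Lemma FPdim_unique f : isFPdim R q f -> forall x, x \in basis q -> f x = (fpd q x)%:R.
Proof.
move=> f_FPdim [|c||c]; rewrite mem_basis /= => c_range.
- by case: f_FPdim.
- by rewrite FPdim_Xm // FPdim_Xq // natr_q_sub1.
- exact: FPdim_Xq.
- by rewrite FPdim_Xp // FPdim_Xq // natr1.
Qed.

Lemma size_basis : size (basis q) = q.+1.
Proof.
rewrite /basis /= size_cat /= !size_map !size_iota half_q_sub2.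
by have := q_double; have := half_gt0; lia.
Qed.

Lemma uniq_basis : uniq (basis q).
Proof.
have Xm_inj : injective Xm by move=> a b [].
have Xp_inj : injective Xp by move=> a b [].
have notin_map (F : nat -> lab) x s : (forall c, F c != x) -> x \notin map F s.
  by move=> F_neq; apply/mapP => -[c _ /eqP]; rewrite eq_sym (negPf (F_neq c)).
rewrite /basis cons_uniq mem_cat in_cons cat_uniq /= !map_inj_uniq ?iota_uniq //=.
rewrite !negb_or !notin_map //= andbT.
by apply/hasPn => _ /mapP[c _ ->]; rewrite notin_map.
Qed.

Lemma sum_fpd : (\sum_(x <- basis q) fpd q x ^ 2 = q * (q ^ 2 - 1))%N.
Proof.
rewrite /basis big_cons big_cat big_cons !big_map /= !big_const_seq !count_predT !size_iota.
rewrite !iter_addn_0 half_q_sub2.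
by move: half_gt0 q_double; case: h => [|k] // _ ->; nia.
Qed.

End Table.

Theorem theorem4p3 (R : realType) (q : nat) (hq : (2 <= q)%N) (hev : ~~ odd q) :
  [/\ size (basis q) = q.+1,
      uniq (basis q),
      isFPdim R q (fun x => (fpd q x)%:R) /\
        (forall f, isFPdim R q f -> forall x, x \in basis q -> f x = (fpd q x)%:R),
      (\sum_(x <- basis q) (fpd q x) ^ 2 = q * (q ^ 2 - 1))%N &
      (forall x y z, x \in basis q -> y \in basis q -> z \in basis q ->
         fusN R q x y z = (rule q x y z)%:R)].
Proof.
split.
- exact: size_basis.
- exact: uniq_basis.
- by split; [exact: fpd_isFPdim | exact: FPdim_unique].
- exact: sum_fpd.
- exact: fusN_rule.
Qed.
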